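(* Assume that for every integer $d\ge5$ and every real $x\ge\frac12\left(d+\sqrt{d+2}\right)$ one has $-\frac{R_d(x)}{P_d(x)}\ge\frac{0.995(d-2)}{2x+d-2}$. Let $s_1\ge1$ and $s_2$ be integers with $s_2>\frac12\left(\sqrt{8s_1+9}-1\right)$, and let $$d_0=\left\lfloor\sqrt{4s_1^2+4s_1+(s_2+\tfrac12)^2}-s_2-\tfrac32\right\rfloor,$$ and suppose $d_0\ge5$. If $$0<\frac{2}{d_0+1}(s_1^2+s_1)-\frac{d_0+2}{2}-s_2\le\frac{0.995(d_0-2)}{2s_1+d_0-2},$$ then the function $f_{s_1,s_2}(N)=\binom{s_2}{N}\sum_i\binom{s_1}{i}\binom{s_1}{N-i}\binom{N}{i}$ attains its maximum over integers $N$ at $N=\left\lfloor 2s_1+s_2+\tfrac32-\sqrt{4s_1^2+4s_1+(s_2+\tfrac12)^2}\right\rfloor+1$.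
   Context: Binomial coefficients $\binom{a}{b}$ are $0$ when $b<0$ or $b>a$. For a nonnegative integer $d$, $P_d(x)=\sum_{i=0}^{d}\frac{(x_i)^2(x_{d-i})^2}{i!\,(d-i)!}$ with $x_i=x(x-1)\cdots(x-i+1)$, and $R_d(x)=P_{d+1}(x)-\left(\frac{2}{d+1}x^2-\frac{2d}{d+1}x+\frac d2\right)P_d(x)$. The first sentence of the claim (the assumed inequality) is the paper's Conjecture 3.1, taken here as a hypothesis. *)

From HB Require Import structures.
From mathcomp Require Import all_boot all_order all_algebra.
From mathcomp Require Import reals.
Set Implicit Arguments. Unset Strict Implicit. Unset Printing Implicit Defensive.
Import Order.TTheory GRing.Theory Num.Theory.
Local Open Scope ring_scope.

Definition falling {R : ringType} (x : R) (i : nat) : R :=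
  \prod_(k < i) (x - k%:R).

Definition Pd {R : fieldType} (d : nat) (x : R) : R :=
  \sum_(i < d.+1) (falling x i) ^+ 2 * (falling x (d - i)) ^+ 2
                    / ((i`!)%:R * ((d - i)`!)%:R).

Definition Rd {R : fieldType} (d : nat) (x : R) : R :=
  Pd d.+1 x - (2 / (d.+1)%:R * x ^+ 2 - 2 * d%:R / (d.+1)%:R * x + d%:R / 2) * Pd d x.

Definition conjecture3p1 (R : realType) : Prop :=
  forall (d : nat) (x : R), (5 <= d)%N ->
    (d%:R + Num.sqrt (d%:R + 2)) / 2 <= x ->
    (995 / 1000) * (d%:R - 2) / (2 * x + d%:R - 2) <= - (Rd d x / Pd d x).

(* f_{s1,s2}(N) = C(s2,N) * sum_i C(s1,i) C(s1,N-i) C(N,i), for integer N;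
   all binomials vanish when N < 0, and the summand vanishes unless 0 <= i <= N. *)
Definition fs (s1 s2 : nat) (N : int) : nat :=
  match N with
  | Posz n => 'C(s2, n) * \sum_(i < n.+1) 'C(s1, i) * 'C(s1, n - i) * 'C(n, i)
  | Negz _ => 0
  end.

From HB Require Import structures.
From mathcomp Require Import all_boot all_order all_algebra.
From mathcomp Require Import reals.
From mathcomp Require Import ring lra zify.
Set Implicit Arguments. Unset Strict Implicit. Unset Printing Implicit Defensive.
Import Order.TTheory GRing.Theory Num.Theory.
Local Open Scope ring_scope.

(** Write [a_k = C(s,k)/k!] and [c_N = sum_i a_i a_(N-i)]. Then
    [f_(s,t)(N) = t(t-1)...(t-N+1) c_N] and [P_d(s) = (s!)^2 c_(2s-d)]. The sequence [a] is
    TP2 (the ratio [a_(k+1)/a_k] decreases), so by a Cauchy-Binet argument its self-convolution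
    [c] is log-concave; hence the ratio [f(N+1)/f(N) = (t-N) c_(N+1)/c_N] is decreasing and [f]
    peaks at any [n] with [f(n-1) <= f(n) >= f(n+1)]. For [n = 2s - d0], Conjecture 3.1 at
    [x = s] is exactly [c_(n-1)/c_n <= t-n+1], i.e. [f(n-1) <= f(n)]; a three-term recurrence
    for [c] (found by Zeilberger's algorithm) turns this into [(t-n) c_(n+1) <= c_n], i.e.
    [f(n+1) <= f(n)], up to a polynomial inequality. The floor expressions of the statement
    are just [d0] and [n]. *)

Lemma unimodal_max disp (T : porderType disp) (f : nat -> T) (n : nat) :
  (forall m, (m < n)%N -> (f m <= f m.+1)%O) ->
  (forall m, (n <= m)%N -> (f m.+1 <= f m)%O) ->
  forall m, (f m <= f n)%O.
Proof.
move=> up down m; case: (leqP m n) => hmn.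
  rewrite -(subnKC hmn); have : (m + (n - m) <= n)%N by rewrite subnKC.
  elim: (n - m)%N => [|k IH] hk; first by rewrite addn0.
  rewrite addnS in hk *; exact: le_trans (IH (ltnW hk)) (up _ hk).
rewrite -(subnKC (ltnW hmn)); elim: (m - n)%N => [|k IH]; first by rewrite addn0.
by apply: le_trans IH; rewrite addnS down ?leq_addr.
Qed.

Section LogConcave.
Variables (R : realFieldType) (c : nat -> R) (L : nat).
Hypothesis c_gt0 : forall k, (k <= L)%N -> 0 < c k.
Hypothesis c_eq0 : forall k, (L < k)%N -> c k = 0.
Hypothesis c_logconcave : forall k, c k * c k.+2 <= c k.+1 ^+ 2.

Let c_ge0 k : 0 <= c k.
Proof. by case: (leqP k L) => hk; [exact/ltW/c_gt0 | rewrite c_eq0]. Qed.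

Lemma ratio_down_step (t : R) k :
  (t - k%:R) * c k.+1 <= c k -> (t - k.+1%:R) * c k.+2 <= c k.+1.
Proof.
move=> H; have c0 := c_ge0 k; have c1 := c_ge0 k.+1; have c2 := c_ge0 k.+2.
rewrite -natr1; case: (lerP t (k%:R + 1)) => ht.
  by apply: le_trans (c1); rewrite mulr_le0_ge0 // subr_le0.
case: (leqP k L) => hk; last by rewrite c_eq0 ?mulr0 //; lia.
have ck := c_gt0 hk.
rewrite -(ler_pM2l ck); apply: le_trans (_ : (t - k%:R) * c k.+1 ^+ 2 <= _).
  rewrite mulrCA; apply: le_trans (_ : (t - (k%:R + 1)) * c k.+1 ^+ 2 <= _).
    by apply: ler_wpM2l (c_logconcave k); lra.
  by apply: ler_wpM2r; rewrite ?sqr_ge0 //; lra.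
by rewrite expr2 mulrA ler_wpM2r.
Qed.

Lemma ratio_up_step (t : R) k : (k < L)%N ->
  c k.+1 <= (t - k.+1%:R) * c k.+2 -> c k <= (t - k%:R) * c k.+1.
Proof.
move=> hk H; have c0 := c_ge0 k; have c2 := c_ge0 k.+2.
have c1 : 0 < c k.+1 by exact: c_gt0.
have tk : 0 <= t - k.+1%:R.
  case: (ltrP (t - k.+1%:R) 0) => // tk.
  have : (t - k.+1%:R) * c k.+2 <= 0 by rewrite mulr_le0_ge0 // ltW.
  by move: (lt_le_trans c1 H); lra.
rewrite -(ler_pM2r c1); apply: le_trans (_ : (t - k.+1%:R) * c k.+1 ^+ 2 <= _).
  apply: le_trans (_ : c k * ((t - k.+1%:R) * c k.+2) <= _); first exact: ler_wpM2l.
  by rewrite mulrCA; apply: ler_wpM2l.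
by rewrite expr2 mulrA !ler_wpM2r ?ltW // -natr1; lra.
Qed.

Lemma ratio_up_below (t : R) n : (n <= L)%N ->
  c n.-1 <= (t - n.-1%:R) * c n -> forall m, (m < n)%N -> c m <= (t - m%:R) * c m.+1.
Proof.
move=> + + m hm; rewrite -(subnKC hm).
elim: (n - m.+1)%N => [|j IH] hL H; first by rewrite addn0 in H.
rewrite addnS addSn /= in hL H; rewrite addSn /= in IH.
by apply: IH (ltnW hL) (ratio_up_step (ltnW hL) H).
Qed.

Lemma ratio_down_above (t : R) n :
  (t - n%:R) * c n.+1 <= c n -> forall m, (n <= m)%N -> (t - m%:R) * c m.+1 <= c m.
Proof.
move=> H m hm; rewrite -(subnKC hm).
by elim: (m - n)%N => [|j IH]; rewrite ?addn0 // addnS; apply: ratio_down_step.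
Qed.

Lemma ffact_mul_max (t n : nat) : (n <= L)%N -> (n <= t)%N ->
  c n.-1 <= (t%:R - n.-1%:R) * c n -> (t%:R - n%:R) * c n.+1 <= c n ->
  forall m, (t ^_ m)%:R * c m <= (t ^_ n)%:R * c n.
Proof.
move=> hnL hnt Hup Hdown; apply: unimodal_max => m hm; rewrite ffactnSr natrM -mulrA.
  rewrite natrB; last exact: leq_trans (ltnW hm) hnt.
  by rewrite ler_wpM2l // (ratio_up_below hnL Hup).
case: (leqP m t) => hmt; last by rewrite (eqP (ltnW hmt)) mul0r mulr0 mulr_ge0 ?c_ge0.
by rewrite natrB // ler_wpM2l // (ratio_down_above Hdown).
Qed.
End LogConcave.

Lemma cauchy_binet2 (R : comRingType) (L : nat) (x y u w : nat -> R) :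
  2 * ((\sum_(k < L) x k * y k) * (\sum_(l < L) u l * w l)
       - (\sum_(k < L) x k * w k) * (\sum_(l < L) u l * y l))
  = \sum_(k < L) \sum_(l < L) (x k * u l - x l * u k) * (y k * w l - y l * w k).
Proof.
have split_term (k l : 'I_L) : (x k * u l - x l * u k) * (y k * w l - y l * w k)
   = ((x k * y k) * (u l * w l) - (x k * w k) * (u l * y l))
     + ((x l * y l) * (u k * w k) - (x l * w l) * (u k * y k)) by ring.
under [RHS]eq_bigr do under eq_bigr do rewrite split_term.
rewrite (eq_bigr _ (fun k _ => big_split _ _ _ _ _)) big_split /=.
rewrite [X in _ = _ + X]exchange_big /=.
suff -> : \sum_(k < L) \sum_(l < L) ((x k * y k) * (u l * w l) - (x k * w k) * (u l * y l))
   = (\sum_(k < L) x k * y k) * (\sum_(l < L) u l * w l)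
       - (\sum_(k < L) x k * w k) * (\sum_(l < L) u l * y l) by ring.
rewrite !mulr_suml -sumrB; apply: eq_bigr => k _.
by rewrite !mulr_sumr -sumrB.
Qed.

Lemma recurrence_certificate (R : comRingType) (S m j a0 a1 b0 b1 b2 : R) :
  (j + 1) ^+ 2 * a1 = (S - j) * a0 ->
  (m - j + 1) ^+ 2 * b1 = (S - (m - j)) * b0 ->
  (m - j + 2) ^+ 2 * b2 = (S - (m - j + 1)) * b1 ->
  (m + 2) ^+ 3 * (a0 * b2)
  - ((2 * S * (2 * m + 3) - (m + 1) * (3 * m + 4)) * (a0 * b1) + 2 * (2 * S - m) * (a0 * b0))
  = (-2 * (j + 1) ^+ 2 * a1 * b0 + (j + 1) ^+ 2 * (2 * (j + 1) - 3 * m - 6) * a1 * b1)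
    - (-2 * j ^+ 2 * a0 * b1 + j ^+ 2 * (2 * j - 3 * m - 6) * a0 * b2).
Proof.
move=> r1 r2 r3; apply/eqP; rewrite -subr_eq0; apply/eqP.
transitivity (2 * b0 * ((j + 1) ^+ 2 * a1 - (S - j) * a0)
    - (2 * j - 3 * m - 4) * b1 * ((j + 1) ^+ 2 * a1 - (S - j) * a0)
    + 2 * a0 * ((m - j + 1) ^+ 2 * b1 - (S - (m - j)) * b0)
    + (2 * j + m + 2) * a0 * ((m - j + 2) ^+ 2 * b2 - (S - (m - j + 1)) * b1)).
  by ring.
by rewrite r1 r2 r3 !subrr !mulr0 subr0 !addr0.
Qed.

Lemma sum_antidiagonal (R : nmodType) (K N : nat) (phi : nat -> nat -> R) :
  (forall i j, (K < i)%N -> phi i j = 0) -> (forall i j, (K < j)%N -> phi i j = 0) ->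
  \sum_(i < N.+1) phi i (N - i)%N
  = \sum_(i < K.+1) \sum_(j < K.+1) (if (i + j == N)%N then phi i j else 0).
Proof.
move=> phi_i phi_j.
have row i : \sum_(j < K.+1) (if (i + j == N)%N then phi i j else 0)
    = if (i <= N)%N then phi i (N - i)%N else 0.
  rewrite -big_mkcond; case: (leqP i N) => hiN; last first.
    by rewrite big_pred0 // => j; apply/negbTE/eqP; lia.
  rewrite (eq_bigl (fun j : 'I_K.+1 => j == (N - i)%N :> nat)); last first.
    by move=> j /=; apply/eqP/eqP; lia.
  by rewrite big_ord1_eq; case: ltnP => // hK; rewrite phi_j //; lia.
under [RHS]eq_bigr => i _ do rewrite row.
rewrite (big_ord_widen (N + K).+1 (fun i => phi i (N - i)%N)); last by lia.
rewrite (big_ord_widen (N + K).+1 (fun i => if (i <= N)%N then phi i (N - i)%N else 0));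
  last by lia.
rewrite big_mkcond [RHS]big_mkcond; apply: eq_bigr => i _.
case: (ltnP i N.+1) => hi; case: (ltnP i K.+1) => hk //=.
- by rewrite -ltnS hi.
- by rewrite phi_i.
- by rewrite leqNgt hi.
Qed.

Lemma falling_nat (R : nzRingType) (n i : nat) : falling (n%:R : R) i = (n ^_ i)%:R.
Proof.
elim: i => [|i IH]; first by rewrite /falling big_ord0 ffactn0.
rewrite /falling big_ord_recr /= -/(falling _ _) IH ffactnSr natrM.
by case: (leqP i n) => h; [rewrite natrB | rewrite ffact_small // !mul0r].
Qed.

Section BinomialOverFactorial.
Variables (R : realFieldType) (s : nat).

Definition binfact (k : int) : R :=
  if k is Posz i then 'C(s, i)%:R / i`!%:R else 0.

Lemma binfact_ge0 k : 0 <= binfact k.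
Proof. by case: k => [i|j] //=; rewrite divr_ge0 ?ler0n. Qed.

Lemma binfact_gt0 (k : int) : 0 <= k <= s%:Z -> 0 < binfact k.
Proof.
by case: k => [i|j] //= hi; rewrite divr_gt0 // ltr0n ?fact_gt0 // bin_gt0; lia.
Qed.

Lemma binfact_eq0 (k : int) : (k < 0) || (s%:Z < k) -> binfact k = 0.
Proof. by case: k => [i|j] //= hi; rewrite bin_small ?mul0r //; lia. Qed.

Lemma binfact_rec (k : int) :
  (k + 1)%:~R ^+ 2 * binfact (k + 1) = (s%:R - k%:~R) * binfact k.
Proof.
case: k => [i|[|j]]; last 2 first.
- by rewrite /= !mulr0 expr0n /= mul0r.
- by rewrite !mulr0.
have -> : Posz i + 1 = Posz i.+1 by rewrite -addn1.
rewrite /= factS natrM.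
have i_fact : i`!%:R != 0 :> R by rewrite pnatr_eq0 -lt0n fact_gt0.
have i1 : i.+1%:R != 0 :> R by rewrite pnatr_eq0.
case: (leqP i s) => his; last first.
  by rewrite !bin_small ?mul0r ?mulr0 // ltnW.
have := congr1 (fun n => n%:R : R) (mul_bin_left s i); rewrite !natrM natrB // => h.
by rewrite [RHS]mulrA -h -!pmulrn; field; rewrite i_fact addrC natr1.
Qed.

Lemma binfact_TP2 (p q : int) :
  p <= q -> binfact p * binfact (q + 1) <= binfact (p + 1) * binfact q.
Proof.
move=> hpq; have a_p1 := binfact_ge0 (p + 1); have a_q := binfact_ge0 q.
case: (ltrP p 0) => hp; first by rewrite binfact_eq0 ?hp // mul0r mulr_ge0.
case: (lerP s%:Z q) => hq.
  by rewrite (@binfact_eq0 (q + 1)) ?mulr0 ?mulr_ge0 //; lia.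
have rp := binfact_rec p; have rq := binfact_rec q; rewrite !intrD in rp rq.
have a_p := binfact_ge0 p; have a_q1 := binfact_ge0 (q + 1).
have h0 : 0 <= p%:~R :> R by rewrite ler0z.
have h1 : p%:~R <= q%:~R :> R by rewrite ler_int.
have h2 : q%:~R + 1 <= s%:R :> R.
  have : q + 1 <= s%:Z by lia.
  by rewrite -(ler_int R) intrD.
move: (binfact p) (binfact q) (binfact (p + 1)) (binfact (q + 1)) rp rq a_p a_q a_p1 a_q1.
move: (p%:~R : R) (q%:~R : R) (s%:R : R) h0 h1 h2 => x y S h0 h1 h2 X Y P1 Q1 rp rq *.
(* after scaling by (x+1)^2 (y+1)^2, the recurrence factors the difference as X Y
   times a manifestly nonnegative polynomial *)
have key : (x + 1) ^+ 2 * (y + 1) ^+ 2 * (P1 * Y - X * Q1)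
   = X * Y * ((y - x) * (y + x + 2) * (S - x) + (x + 1) ^+ 2 * (y - x)).
  have -> : (x + 1) ^+ 2 * (y + 1) ^+ 2 * (P1 * Y - X * Q1)
     = (y + 1) ^+ 2 * Y * ((x + 1) ^+ 2 * P1) - (x + 1) ^+ 2 * X * ((y + 1) ^+ 2 * Q1) by ring.
  by rewrite rp rq; ring.
rewrite -subr_ge0 -(pmulr_rge0 _ (_ : 0 < (x + 1) ^+ 2 * (y + 1) ^+ 2)); last first.
  by rewrite mulr_gt0 // exprn_gt0 //; lra.
by rewrite key !mulr_ge0 // addr_ge0 // !mulr_ge0 ?sqr_ge0 //; lra.
Qed.

Definition binfact_conv (N : nat) : R :=
  \sum_(i < N.+1) binfact i%:Z * binfact (N%:Z - i%:Z).

Lemma binfact_conv_widen N L : (N < L)%N ->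
  binfact_conv N = \sum_(i < L) binfact i%:Z * binfact (N%:Z - i%:Z).
Proof.
move=> hNL; rewrite /binfact_conv.
rewrite (big_ord_widen L (fun i : nat => binfact i%:Z * binfact (N%:Z - i%:Z))) // big_mkcond.
apply: eq_bigr => i _; case: ifPn => //; rewrite -leqNgt => hi.
by rewrite (@binfact_eq0 (N%:Z - i%:Z)) ?mulr0 //; lia.
Qed.

Lemma binfact_conv_eq0 N : (2 * s < N)%N -> binfact_conv N = 0.
Proof.
move=> hN; apply: big1 => i _; case: (leqP i s) => hi.
  by rewrite (@binfact_eq0 (N%:Z - i%:Z)) ?mulr0 //; lia.
by rewrite binfact_eq0 ?mul0r //; lia.
Qed.

Lemma binfact_conv_gt0 N : (N <= 2 * s)%N -> 0 < binfact_conv N.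
Proof.
move=> hN; have hi0 : ((N - s)%N < N.+1)%N by lia.
rewrite /binfact_conv (bigD1 (Ordinal hi0)) //; apply: ltr_wpDr.
  by apply: sumr_ge0 => i _; rewrite mulr_ge0 ?binfact_ge0.
by rewrite mulr_gt0 // binfact_gt0 //= ?subzn; lia.
Qed.

Lemma binfact_minors_mul_ge0 (n m1 m2 : int) :
  0 <= (binfact (n - m1) * binfact (n + 1 - m2) - binfact (n - m2) * binfact (n + 1 - m1))
       * (binfact m1 * binfact (m2 - 1) - binfact m2 * binfact (m1 - 1)).
Proof.
wlog h : m1 m2 / m1 <= m2.
  move=> W; case: (lerP m1 m2) => h; first exact: W.
  by rewrite -mulrNN !opprB W // ltW.
apply: mulr_ge0; rewrite subr_ge0.
  have := @binfact_TP2 (n - m2) (n - m1) ltac:(lia).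
  by rewrite -!addrA ![_ + 1]addrC !addrA mulrC [X in _ <= X]mulrC.
by have := @binfact_TP2 (m1 - 1) (m2 - 1) ltac:(lia); rewrite !subrK mulrC.
Qed.

Lemma binfact_conv_logconcave k :
  binfact_conv k * binfact_conv k.+2 <= binfact_conv k.+1 ^+ 2.
Proof.
set n := k.+1.
pose x m := binfact (n%:Z - m%:Z); pose y m := binfact m%:Z.
pose u m := binfact (n%:Z + 1 - m%:Z); pose w m := binfact (m%:Z - 1).
have := cauchy_binet2 n.+2 x y u w.
have -> : \sum_(m < n.+2) x m * y m = binfact_conv n.
  by rewrite (@binfact_conv_widen n n.+2) //; apply: eq_bigr => i _; rewrite mulrC.
have -> : \sum_(m < n.+2) u m * w m = binfact_conv n.
  rewrite big_ord_recl {1}/w binfact_eq0 // mulr0 add0r.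
  apply: eq_bigr => i _; rewrite lift0 mulrC /u /w; congr (_ * _); congr binfact; lia.
have -> : \sum_(m < n.+2) x m * w m = binfact_conv k.
  rewrite big_ord_recl {1}/w binfact_eq0 // mulr0 add0r (@binfact_conv_widen k n.+1) //.
  apply: eq_bigr => i _; rewrite lift0 mulrC /x /w; congr (_ * _); congr binfact; lia.
have -> : \sum_(m < n.+2) u m * y m = binfact_conv n.+1.
  by apply: eq_bigr => i _; rewrite /u /y mulrC; congr (_ * _); congr binfact; lia.
have : 0 <= \sum_(i < n.+2) \sum_(j < n.+2) (x i * u j - x j * u i) * (y i * w j - y j * w i).
  by do 2!apply: sumr_ge0 => ? _; exact: binfact_minors_mul_ge0.
by move=> + E; rewrite -E expr2; lra.
Qed.

Lemma binfact_conv_rec M :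
  (M%:R + 2) ^+ 3 * binfact_conv M.+2
  = (2 * s%:R * (2 * M%:R + 3) - (M%:R + 1) * (3 * M%:R + 4)) * binfact_conv M.+1
    + 2 * (2 * s%:R - M%:R) * binfact_conv M.
Proof.
rewrite (@binfact_conv_widen M.+2 M.+3) // (@binfact_conv_widen M.+1 M.+3) //.
rewrite (@binfact_conv_widen M M.+3); last by rewrite ltnS leqW.
(* a Zeilberger certificate: the summands of the recurrence are the differences of G *)
pose G i := -2 * i%:R ^+ 2 * binfact i%:Z * binfact (M.+1%:Z - i%:Z)
   + i%:R ^+ 2 * (2 * i%:R - 3 * M%:R - 6) * binfact i%:Z * binfact (M.+2%:Z - i%:Z) : R.
have telescope : \sum_(i < M.+3) (G i.+1 - G i) = 0.
  rewrite -(big_mkord xpredT (fun i => G i.+1 - G i)) telescope_sumr // /G.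
  by rewrite !(@binfact_eq0 (_ - M.+3%:Z)) ?mulr0n; [ring | lia | lia].
rewrite !mulr_sumr -big_split; apply/eqP; rewrite -subr_eq0 -sumrB; apply/eqP.
rewrite -[RHS]telescope; apply: eq_bigr => i _.
have r1 : (i%:R + 1) ^+ 2 * binfact i.+1%:Z = (s%:R - i%:R) * binfact i%:Z.
  have -> : i.+1%:Z = i%:Z + 1 by lia.
  by have := binfact_rec i%:Z; rewrite intrD.
have r2 : (M%:R - i%:R + 1) ^+ 2 * binfact (M.+1%:Z - i%:Z)
          = (s%:R - (M%:R - i%:R)) * binfact (M%:Z - i%:Z).
  have := binfact_rec (M%:Z - i%:Z); rewrite intrD intrB.
  by have -> : M%:Z - i%:Z + 1 = M.+1%:Z - i%:Z by lia.
have r3 : (M%:R - i%:R + 2) ^+ 2 * binfact (M.+2%:Z - i%:Z)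
          = (s%:R - (M%:R - i%:R + 1)) * binfact (M.+1%:Z - i%:Z).
  have := binfact_rec (M.+1%:Z - i%:Z).
  have -> : M.+1%:Z - i%:Z + 1 = M.+2%:Z - i%:Z by lia.
  by move=> h; apply: etrans (etrans _ h) _; [congr (_ ^+ 2 * _) | congr (_ * _)]; ring.
have := recurrence_certificate r1 r2 r3.
rewrite /G -[i.+1%:R]natr1.
have -> : M.+1%:Z - i.+1%:Z = M%:Z - i%:Z by lia.
by have -> : M.+2%:Z - i.+1%:Z = M.+1%:Z - i%:Z by lia.
Qed.

Lemma fs_binfact_conv (t N : nat) :
  (fs s t (Posz N))%:R = (t ^_ N)%:R * binfact_conv N :> R.
Proof.
rewrite /fs natrM -bin_ffact natrM -mulrA; congr (_ * _); rewrite natr_sum mulr_sumr.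
apply: eq_bigr => i _; have hi : (i <= N)%N by rewrite -ltnS.
have := congr1 (fun n => n%:R : R) (bin_fact hi); rewrite !natrM => hf.
have fi : i`!%:R != 0 :> R by rewrite pnatr_eq0 -lt0n fact_gt0.
have fNi : (N - i)`!%:R != 0 :> R by rewrite pnatr_eq0 -lt0n fact_gt0.
by rewrite -hf subzn // /binfact /=; field; rewrite fi fNi.
Qed.

Lemma falling_sq_div_fact (i : nat) : (i <= s)%N ->
  (s ^_ i)%:R ^+ 2 / i`!%:R = s`!%:R * binfact (s - i)%N :> R.
Proof.
move=> hi; have := congr1 (fun n => n%:R : R) (ffact_fact hi); rewrite natrM => hf.
have fi : i`!%:R != 0 :> R by rewrite pnatr_eq0 -lt0n fact_gt0.
have fsi : (s - i)`!%:R != 0 :> R by rewrite pnatr_eq0 -lt0n fact_gt0.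
by rewrite /binfact /= bin_sub // -hf -bin_ffact natrM; field; rewrite fi fsi.
Qed.

Lemma Pd_binfact_conv d : (d <= 2 * s)%N ->
  Pd d (s%:R : R) = s`!%:R ^+ 2 * binfact_conv (2 * s - d).
Proof.
move=> hd; pose al i := (s ^_ i)%:R ^+ 2 / i`!%:R : R.
have al_eq0 i : (s < i)%N -> al i = 0.
  by move=> hi; rewrite /al ffact_small // expr0n !mul0r.
have a_eq0 i : (s < i)%N -> binfact i = 0 by move=> hi; rewrite binfact_eq0 //; lia.
have -> : Pd d (s%:R : R) = \sum_(i < d.+1) al i * al (d - i)%N.
  by apply: eq_bigr => i _; rewrite !falling_nat mulf_div.
have -> : binfact_conv (2 * s - d)
    = \sum_(i < (2 * s - d).+1) binfact i * binfact (2 * s - d - i)%N.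
  by apply: eq_bigr => i _; rewrite subzn // -ltnS.
rewrite (@sum_antidiagonal _ s d (fun i j => al i * al j)); first last.
- by move=> i j /al_eq0 ->; rewrite mulr0.
- by move=> i j /al_eq0 ->; rewrite mul0r.
rewrite (@sum_antidiagonal _ s _ (fun i j => binfact i * binfact j)); first last.
- by move=> i j /a_eq0 ->; rewrite mulr0.
- by move=> i j /a_eq0 ->; rewrite mul0r.
rewrite (reindex_inj rev_ord_inj) mulr_sumr; apply: eq_bigr => i _ /=.
rewrite (reindex_inj rev_ord_inj) mulr_sumr; apply: eq_bigr => j _ /=.
have hi : (i <= s)%N := ltn_ord i; have hj : (j <= s)%N := ltn_ord j.
have -> : (s.+1 - i.+1 + (s.+1 - j.+1) == d)%N = (i + j == 2 * s - d)%N.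
  by apply/eqP/eqP; lia.
case: eqP => _; last by rewrite mulr0.
rewrite /al !subSS !falling_sq_div_fact ?leq_subr // !subKn //.
by rewrite mulrACA -expr2.
Qed.
End BinomialOverFactorial.

(* The quantity constrained by the hypotheses of the theorem, with [s = s1], [t = s2] and
   [d = d0]. *)
Definition peak_gap {R : fieldType} (s t d : nat) : R :=
  2 / (d%:R + 1) * (s%:R ^+ 2 + s%:R) - (d%:R + 2) / 2 - t%:R.

Lemma Rd_Pd_binfact_conv (R : realFieldType) (s d : nat) : (d < 2 * s)%N ->
  - (Rd d (s%:R : R) / Pd d s%:R)
  = 2 / (d%:R + 1) * s%:R ^+ 2 - 2 * d%:R / (d%:R + 1) * s%:R + d%:R / 2
    - binfact_conv R s (2 * s - d).-1 / binfact_conv R s (2 * s - d).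
Proof.
move=> hd; rewrite /Rd (Pd_binfact_conv _ hd) (Pd_binfact_conv _ (ltnW hd)) -subnS.
have c_gt0 := binfact_conv_gt0 R (leq_subr d (2 * s)).
have s_fact : s`!%:R != 0 :> R by rewrite pnatr_eq0 -lt0n fact_gt0.
have d1 : d%:R + 1 != 0 :> R by rewrite natr1 pnatr_eq0.
by rewrite -natr1; field; rewrite d1 s_fact lt0r_neq0.
Qed.

Lemma binfact_conv_lower (R : realFieldType) (s t d : nat) : (d < 2 * s)%N ->
  peak_gap s t d <= - (Rd d (s%:R : R) / Pd d s%:R) ->
  binfact_conv R s (2 * s - d).-1
    <= (t%:R - (2 * s - d).-1%:R) * binfact_conv R s (2 * s - d).
Proof.
move=> hd; have c_gt0 := binfact_conv_gt0 R (leq_subr d (2 * s)).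
have -> : (2 * s - d).-1%:R = 2 * s%:R - d%:R - 1 :> R.
  by rewrite -subn1 !natrB ?natrM //; lia.
have d1 : d%:R + 1 != 0 :> R by rewrite natr1 pnatr_eq0.
have gapE : 2 / (d%:R + 1) * s%:R ^+ 2 - 2 * d%:R / (d%:R + 1) * s%:R + d%:R / 2
    - peak_gap s t d = t%:R - (2 * s%:R - d%:R - 1) :> R.
  by rewrite /peak_gap; field.
rewrite Rd_Pd_binfact_conv // -ler_pdivrMr // -gapE; lra.
Qed.

Lemma peak_cubic_bound (R : realFieldType) (n d v t : R) :
  1 <= n -> 0 <= d -> 0 <= v <= 1 ->
  t = ((n + d) ^+ 2 + 2 * (n + d)) / (2 * (d + 1)) - (d + 2) / 2 - v ->
  (t - n) * ((n + d) * (2 * n + 1) - n * (3 * n + 1) + 2 * (d + 1) * (t - n + 1))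
    <= (n + 1) ^+ 3.
Proof.
move=> hn hd /andP[hv0 hv1] ->.
have d1 : d + 1 != 0 by rewrite lt0r_neq0 // ltr_wpDl.
(* 4 (d + 1)^2 times the difference of the two sides, as a polynomial in n - 1, d, v
   and 1 - v with nonnegative coefficients *)
pose E := 4*n^+3*d+4*n^+3+4*n^+2*d^+2*v+8*n^+2*d^+2+8*n^+2*d*v+20*n^+2*d+4*n^+2*v+12*n^+2
  +8*n*d^+3*v+4*n*d^+3+16*n*d^+2*v+8*n*d*v
  + (12*(n-1)+24*(n-1)*d^+2+32*(n-1)*d+4*d^+3*(1-v)*(1+2*v)+24*d^+2*(1-v)*(1+v)+16*d^+2
     +12*d*((1-v)*(4+3*v)+v^+2)+8*(1-v)*(2+v)).
rewrite -subr_ge0 (_ : _ - _ = E / (4 * (d + 1) ^+ 2)); last by rewrite /E; field.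
rewrite divr_ge0 ?(mulr_ge0 _ (sqr_ge0 _)) // /E.
have h1 : 0 <= n - 1 by lra.
have h2 : 0 <= 1 - v by lra.
repeat apply: addr_ge0; repeat apply: mulr_ge0; rewrite ?exprn_ge0 //; try lra.
by apply: addr_ge0; [apply: mulr_ge0; lra | rewrite exprn_ge0].
Qed.

Lemma binfact_conv_upper (R : realFieldType) (s t d : nat) :
  (d < 2 * s)%N -> (2 * s - d <= t)%N -> 0 <= (peak_gap s t d : R) <= 1 ->
  binfact_conv R s (2 * s - d).-1
    <= (t%:R - (2 * s - d).-1%:R) * binfact_conv R s (2 * s - d) ->
  (t%:R - (2 * s - d)%:R) * binfact_conv R s (2 * s - d).+1
    <= binfact_conv R s (2 * s - d).
Proof.
move=> hd hnt hgap Hlo; set n := (2 * s - d)%N in hnt Hlo *.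
have n_pos : (0 < n)%N by rewrite subn_gt0.
have := binfact_conv_rec R s n.-1; rewrite !prednK // => conv_rec.
set cm := binfact_conv R s n.-1 in Hlo conv_rec *.
set cn := binfact_conv R s n in conv_rec *; set cp := binfact_conv R s n.+1 in conv_rec *.
have cn_ge0 : 0 <= cn by exact/ltW/binfact_conv_gt0/leq_subr.
have sE : s%:R = (n%:R + d%:R) / 2 :> R.
  by rewrite /n natrB ?natrM 1?ltnW //; field.
have n1E : n.-1%:R = n%:R - 1 :> R by rewrite -subn1 natrB.
have tn : 0 <= t%:R - n%:R :> R by rewrite subr_ge0 ler_nat.
have n1 : 1 <= n%:R :> R by rewrite ler1n.
have n3 : 0 < (n%:R + 1) ^+ 3 :> R by rewrite exprn_gt0 // ltr_wpDl.
have d1 : d%:R + 1 != 0 :> R by rewrite natr1 pnatr_eq0.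
set A := (n%:R + d%:R) * (2 * n%:R + 1) - n%:R * (3 * n%:R + 1) : R.
have rec : (n%:R + 1) ^+ 3 * cp = A * cn + 2 * (d%:R + 1) * cm.
  rewrite (_ : n%:R + 1 = n.-1%:R + 2) ?conv_rec n1E /A; last by ring.
  set S := s%:R; have -> : S = (n%:R + d%:R) / 2 by exact: sE.
  by field.
have t_eq : t%:R = ((n%:R + d%:R) ^+ 2 + 2 * (n%:R + d%:R)) / (2 * (d%:R + 1))
    - (d%:R + 2) / 2 - peak_gap s t d :> R.
  rewrite /peak_gap; set S := s%:R; have -> : S = (n%:R + d%:R) / 2 by exact: sE.
  by field.
have cubic := peak_cubic_bound n1 (ler0n _ d) hgap t_eq.
rewrite -(ler_pM2l n3) mulrCA rec mulrDr.
apply: le_trans (_ : (t%:R - n%:R) * (A * cn)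
    + (t%:R - n%:R) * (2 * (d%:R + 1) * ((t%:R - n%:R + 1) * cn)) <= _).
  rewrite lerD2l; apply: (ler_wpM2l tn); apply: ler_wpM2l.
    by rewrite mulr_ge0 // addr_ge0.
  by have -> : t%:R - n%:R + 1 = t%:R - n.-1%:R :> R by rewrite n1E; ring.
rewrite (_ : _ + _ = (t%:R - n%:R) * (A + 2 * (d%:R + 1) * (t%:R - n%:R + 1)) * cn).
  by apply: ler_wpM2r.
by ring.
Qed.

Lemma peak_gap_gt0 (R : realFieldType) (s t d : nat) :
  (0 < (peak_gap s t d : R)) = ((d + 1) * (d + 2) + 2 * t * (d + 1) < 4 * (s * s + s))%N.
Proof.
have d1 : 0 < d%:R + 1 :> R by rewrite ltr_wpDl.
have E : 2 * (d%:R + 1) * peak_gap s t d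
    = 4 * (s%:R * s%:R + s%:R) - ((d%:R + 1) * (d%:R + 2) + 2 * t%:R * (d%:R + 1)) :> R.
  by rewrite /peak_gap; field; rewrite lt0r_neq0.
by rewrite -(ltr_nat R) !(natrD, natrM) -subr_gt0 -E pmulr_rgt0 // mulr_gt0.
Qed.

Lemma peak_nat_bounds (s t d : nat) :
  ((d + 1) * (d + 2) + 2 * t * (d + 1) < 4 * (s * s + s))%N ->
  (4 * (s * s + s) < (d + 2) * (d + 3 + 2 * t))%N ->
  (8 * s + 9 < (2 * t + 1) * (2 * t + 1))%N ->
  [/\ (d < 2 * s)%N, (2 * s - d <= t)%N & (d + 2 < (2 * s - d) * (2 * s - d))%N].
Proof.
have -> : (4 * (s * s + s) = (2 * s) * (2 * s) + 2 * (2 * s))%N by ring.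
have -> : (8 * s = 4 * (2 * s))%N by ring.
move: (2 * s)%N => m Na Nb Nc.
have hdm : (d < m)%N.
  rewrite ltnNge; apply/negP => hmd.
  have : (m * m <= d * d)%N by apply: leq_mul.
  lia.
suff : (m - d <= t)%N /\ (d + 2 < (m - d) * (m - d))%N by case.
move: Na Nb Nc; rewrite -(subnKC (ltnW hdm)) addKn; move: (m - d)%N => n Na Nb Nc.
have hnt : (n <= t)%N.
  rewrite leqNgt; apply/negP => htn.
  have : ((t + 1) * (t + 1) <= n * n)%N by apply: leq_mul; lia.
  have : ((t + 1) * d <= n * d)%N by apply: leq_mul; lia.
  lia.
split => //; have : (n * (d + 1) <= t * (d + 1))%N by apply: leq_mul.
lia.
Qed.

Lemma fs_max_at (R : realType) (s t d : nat) : conjecture3p1 R -> (5 <= d)%N ->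
  (8 * s + 9 < (2 * t + 1) * (2 * t + 1))%N ->
  (4 * (s * s + s) < (d + 2) * (d + 3 + 2 * t))%N ->
  0 < (peak_gap s t d : R) ->
  (peak_gap s t d : R) <= 995 / 1000 * (d%:R - 2) / (2 * s%:R + d%:R - 2) ->
  forall m : int, (fs s t m <= fs s t (2 * s - d)%N)%N.
Proof.
move=> conj d5 Nc Nb gap_gt0 gap_le; have Na := gap_gt0; rewrite peak_gap_gt0 in Na.
have [hd hnt hn2] := peak_nat_bounds Na Nb Nc.
have s_large : (d%:R + Num.sqrt (d%:R + 2)) / 2 <= s%:R :> R.
  have : Num.sqrt (d%:R + 2) <= (2 * s - d)%N%:R :> R.
    rewrite -[X in _ <= X]ger0_norm // -sqrtr_sqr ler_sqrt ?sqr_ge0 //.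
    by rewrite expr2 -natrM -(natrD _ d 2) ler_nat ltnW.
  by rewrite natrB ?natrM 1?ltnW //; lra.
have gap01 : 0 <= (peak_gap s t d : R) <= 1.
  have s1 : 1 <= s%:R :> R by rewrite ler1n; lia.
  have d5R : 5 <= d%:R :> R by rewrite (ler_nat R 5 d).
  by rewrite ltW //=; apply: le_trans gap_le _; rewrite ler_pdivrMr; lra.
have Hlo := binfact_conv_lower hd (le_trans gap_le (conj d s%:R d5 s_large)).
have Hhi := binfact_conv_upper hd hnt gap01 Hlo.
case=> [m|m] //; rewrite -(ler_nat R) !fs_binfact_conv.
exact: (ffact_mul_max (@binfact_conv_gt0 R s) (@binfact_conv_eq0 R s)
  (@binfact_conv_logconcave R s) (leq_subr d (2 * s)) hnt Hlo Hhi).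
Qed.

Lemma sqrt_lt_nat (R : rcfType) (s t : nat) :
  (Num.sqrt (8 * s%:R + 9 : R) - 1) / 2 < t%:R ->
  (8 * s + 9 < (2 * t + 1) * (2 * t + 1))%N.
Proof.
set q := Num.sqrt _ => ht; have q0 : 0 <= q by exact: sqrtr_ge0.
have q2 : q * q = 8 * s%:R + 9 by rewrite -expr2 sqr_sqrtr // addr_ge0 // mulr_ge0.
rewrite -(ltr_nat R) !(natrD, natrM) -q2; nra.
Qed.

Lemma floor_peak (R : realType) (s t d : nat) :
  Num.floor (Num.sqrt (4 * s%:R ^+ 2 + 4 * s%:R + (t%:R + 1 / 2) ^+ 2 : R)
             - t%:R - 3 / 2) = d ->
  0 < (peak_gap s t d : R) ->
  (4 * (s * s + s) < (d + 2) * (d + 3 + 2 * t))%N /\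
  Num.floor (2 * s%:R + t%:R + 3 / 2
             - Num.sqrt (4 * s%:R ^+ 2 + 4 * s%:R + (t%:R + 1 / 2) ^+ 2 : R)) + 1
  = (2 * s - d)%N.
Proof.
set S := Num.sqrt _ => floorE gap_gt0.
have S0 : 0 <= S by exact: sqrtr_ge0.
have S2 : S ^+ 2 = 4 * s%:R ^+ 2 + 4 * s%:R + (t%:R + 1 / 2) ^+ 2.
  by rewrite sqr_sqrtr // !addr_ge0 ?sqr_ge0 ?mulr_ge0 ?exprn_ge0.
have := floor_itv (S - t%:R - 3 / 2); rewrite floorE intrD => /andP[S_ge S_lt].
have Na := gap_gt0; rewrite peak_gap_gt0 -(ltr_nat R) !(natrD, natrM) in Na.
have S_gt : d%:R + t%:R + 3 / 2 < S.
  rewrite ltNge; apply/negP => S_le.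
  have : S ^+ 2 <= (d%:R + t%:R + 3 / 2) ^+ 2 by rewrite ler_sqr ?nnegrE //; lra.
  by rewrite S2 expr2; nra.
have hd : (d <= 2 * s)%N.
  rewrite leqNgt; apply/negP => /ltnW; rewrite -(ler_nat R) natrM => h.
  have : 0 <= t%:R * (d%:R + 1) :> R by rewrite mulr_ge0 // addr_ge0.
  have : 0 <= (d%:R - 2 * s%:R) * (d%:R + 2 * s%:R + 2) :> R.
    by rewrite mulr_ge0 ?subr_ge0 // !addr_ge0 // mulr_ge0.
  nra.
split.
  rewrite -(ltr_nat R) !(natrD, natrM).
  have : S ^+ 2 < (d%:R + t%:R + 5 / 2) ^+ 2 by rewrite ltr_sqr ?nnegrE //; lra.
  by rewrite S2 !expr2; nra.
rewrite (@floor_def _ _ ((2 * s - d)%N%:Z - 1)) ?subrK // intrB.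
have nE : ((2 * s - d)%N%:~R : R) = 2 * s%:R - d%:R by rewrite -pmulrn natrB ?natrM.
by rewrite nE; apply/andP; split; lra.
Qed.

Unset Implicit Arguments.

Theorem theorem3p2 (R : realType) (s1 s2 : nat) :
  conjecture3p1 R ->
  (1 <= s1)%N ->
  (Num.sqrt (8 * s1%:R + 9 : R) - 1) / 2 < s2%:R ->
  let d0 : int :=
    Num.floor (Num.sqrt (4 * s1%:R ^+ 2 + 4 * s1%:R + (s2%:R + 1 / 2) ^+ 2 : R)
               - s2%:R - 3 / 2) in
  5 <= d0 ->
  0 < 2 / (d0%:~R + 1) * (s1%:R ^+ 2 + s1%:R) - (d0%:~R + 2) / 2 - s2%:R :> R ->
  2 / (d0%:~R + 1) * (s1%:R ^+ 2 + s1%:R) - (d0%:~R + 2) / 2 - s2%:R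
    <= (995 / 1000) * (d0%:~R - 2) / (2 * s1%:R + d0%:~R - 2) :> R ->
  let N0 : int :=
    Num.floor (2 * s1%:R + s2%:R + 3 / 2
               - Num.sqrt (4 * s1%:R ^+ 2 + 4 * s1%:R + (s2%:R + 1 / 2) ^+ 2 : R)) + 1 in
  forall N : int, (fs s1 s2 N <= fs s1 s2 N0)%N.
Proof.
move=> conj _ s2_large d0 d0_ge5 gap_gt0 gap_le N0.
have [d d0E] : exists d : nat, d0 = d by move: d0_ge5; case: (d0) => // d _; exists d.
rewrite d0E in d0_ge5 gap_gt0 gap_le.
have [Nb N0E] := floor_peak d0E gap_gt0.
rewrite /N0 N0E.
exact: fs_max_at conj d0_ge5 (sqrt_lt_nat s2_large) Nb gap_gt0 gap_le.
Qed.
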